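(* If $\mathcal{C}$ is a properly-splitted hypergraph, then $\psi(\mathcal{C})=\operatorname{conn_h}(\operatorname{Ind}(\mathcal{C}))+2$.
   Context: A hypergraph $\mathcal{C}$ on a finite vertex set $V$ is a family of pairwise incomparable subsets of $V$ (its edges), each of cardinality at least $2$; vertices lying in no edge are allowed. The independence complex $\operatorname{Ind}(\mathcal{C})$ is the simplicial complex on $V$ whose faces are the subsets of $V$ containing no edge of $\mathcal{C}$ (if $V=\emptyset$ it is $\{\emptyset\}$). For an edge $F$: $\mathcal{C}-F$ is the hypergraph on $V$ with edge set $\mathcal{C}\setminus\{F\}$; $N_{\mathcal{C}}(F)=\bigcup\{E\setminus F : E\in\mathcal{C},\ |E\setminus F|=1\}$; and $\mathcal{C}:F$ is the hypergraph on $V\setminus(F\cup N_{\mathcal{C}}(F))$ whose edges are the members of cardinality at least $2$ among the inclusion-minimal members of the family $\{E\setminus F : E\in \mathcal{C}-F\}$. The number $\psi(\mathcal{C})\in\mathbb{Z}_{\ge 0}\cup\{\infty\}$ is defined recursively: $\psi(\mathcal{C})=0$ if $V=\emptyset$; $\psi(\mathcal{C})=\infty$ if $V\neq\emptyset$ and $\mathcal{C}$ has no edges; otherwise $\psi(\mathcal{C})=\max_{F\in\mathcal{C}}\min\{\psi(\mathcal{C}-F),\ \psi(\mathcal{C}:F)+|F|-1\}$. The homological connectivity $\operatorname{conn_h}(\Delta)$ is the largest integer $k$ such that $\tilde H_i(\Delta;\mathbb{Z})=0$ for all $i\le k$ ($\infty$ if all vanish; $\operatorname{conn_h}(\{\emptyset\})=-2$).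 A hypergraph $\mathcal{C}$ is properly-splitted (recursively on the number of edges) if either $\mathcal{C}$ has no edges, or $\mathcal{C}$ has an edge $F$ with $\operatorname{conn_h}(\operatorname{Ind}(\mathcal{C}:F))\ge \operatorname{conn_h}(\operatorname{Ind}(\mathcal{C}))-|F|+1$ such that both $\mathcal{C}-F$ and $\mathcal{C}:F$ are properly-splitted. *)

From mathcomp Require Import all_boot all_order all_algebra.
From Stdlib Require Import ClassicalEpsilon.
Set Implicit Arguments. Unset Strict Implicit. Unset Printing Implicit Defensive.
Import Order.TTheory GRing.Theory Num.Theory.

(* Extended integers: [Some z] is the integer z, [None] is +infinity. *)
Definition xint := option int.

Definition xmin (a b : xint) : xint :=
  match a, b with
  | None, _ => b
  | _, None => a
  | Some x, Some y => Some (Order.min x y)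
  end.

Definition xmax (a b : xint) : xint :=
  match a, b with
  | None, _ => None
  | _, None => None
  | Some x, Some y => Some (Order.max x y)
  end.

Definition xaddz (a : xint) (k : int) : xint := omap (fun x => (x + k)%R) a.

Definition xle (a b : xint) : bool :=
  match b with
  | None => true
  | Some y => match a with None => false | Some x => (x <= y)%R end
  end.

Section Hyper.
Variable T : finType.

Definition is_hypergraph (V : {set T}) (C : {set {set T}}) : Prop :=
  (forall E, E \in C -> E \subset V /\ 2 <= #|E|) /\
  (forall E E', E \in C -> E' \in C -> E \subset E' -> E = E').

Definition Ind (V : {set T}) (C : {set {set T}}) : {set {set T}} :=
  [set A : {set T} | (A \subset V) && [forall E in C, ~~ (E \subset A)]].

Definition hdel (C : {set {set T}}) (F : {set T}) : {set {set T}} := C :\ F.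

Definition hnbhd (C : {set {set T}}) (F : {set T}) : {set T} :=
  \bigcup_(E in C | #|E :\: F| == 1) (E :\: F).

Definition hcolonV (V : {set T}) (C : {set {set T}}) (F : {set T}) : {set T} :=
  V :\: (F :|: hnbhd C F).

Definition hcolonC (C : {set {set T}}) (F : {set T}) : {set {set T}} :=
  let Fam := [set E :\: F | E in C :\ F] in
  [set D in Fam | [forall D' in Fam, (D' \subset D) ==> (D' == D)] && (2 <= #|D|)].

(* psi, computed with fuel; at top level the fuel is the number of edges,
   which suffices since both C - F and C : F have fewer edges than C. *)
Fixpoint psi_fuel (n : nat) (V : {set T}) (C : {set {set T}}) : xint :=
  if V == set0 then Some 0%R
  else if C == set0 then None
  else match n with
  | 0 => None (* unreachable with sufficient fuel *)
  | n'.+1 =>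
      let g F := xmin (psi_fuel n' V (hdel C F))
                      (xaddz (psi_fuel n' (hcolonV V C F) (hcolonC C F))
                             (#|F|%:Z - 1)%R) in
      match enum C with
      | [::] => None
      | F0 :: Fs => foldr (fun F acc => xmax (g F) acc) (g F0) Fs
      end
  end.

Definition psi (V : {set T}) (C : {set {set T}}) : xint := psi_fuel #|C| V C.

(* An oriented simplex is ordered by [enum_rank]. A k-chain (k = dimension+1
   = number of vertices of the simplices) is a function c : {set T} -> int
   supported on faces of D with exactly k vertices; k = 0 gives the
   augmentation degree -1 of reduced homology. *)
Definition is_chain (D : {set {set T}}) (k : nat) (c : {set T} -> int) : Prop :=
  forall s, c s != 0%R -> s \in D /\ #|s| = k.

(* sign (-1)^j where j is the position of v in the ordered simplex v |: tau *)
Definition bsign (v : T) (tau : {set T}) : int :=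
  ((-1) ^+ #|[set u in tau | (enum_rank u < enum_rank v)%N]|)%R.

Definition bd (c : {set T} -> int) (tau : {set T}) : int :=
  (\sum_(v | v \notin tau) c (v |: tau) * bsign v tau)%R.

(* \tilde H_{k-1}(D; Z) = 0 : every (k-1)-dim cycle is a boundary *)
Definition rhom_vanish (D : {set {set T}}) (k : nat) : Prop :=
  forall c, is_chain D k c -> (forall tau, bd c tau = 0%R) ->
  exists d, is_chain D k.+1 d /\ forall s, bd d s = c s.

Definition rhom_vanishb (D : {set {set T}}) (k : nat) : bool :=
  if excluded_middle_informative (rhom_vanish D k) then true else false.

(* conn_h(D): largest integer m with \tilde H_i = 0 for all i <= m
   (None = infinity). Groups in degrees i <= -2 are zero; if k0 is the least
   k with \tilde H_{k-1} <> 0, then conn_h = k0 - 2. *)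
Definition conn_h (D : {set {set T}}) : xint :=
  match excluded_middle_informative (exists k, ~~ rhom_vanishb D k) with
  | left H => Some ((ex_minn H)%:Z - 2)%R
  | right _ => None
  end.

Inductive properly_splitted : {set T} -> {set {set T}} -> Prop :=
  | PS_empty V : properly_splitted V set0
  | PS_split (V : {set T}) (C : {set {set T}}) (F : {set T}) : F \in C ->
      xle (xaddz (conn_h (Ind V C)) (1 - #|F|%:Z)%R)
          (conn_h (Ind (hcolonV V C F) (hcolonC C F))) ->
      properly_splitted V (hdel C F) ->
      properly_splitted (hcolonV V C F) (hcolonC C F) ->
      properly_splitted V C.

End Hyper.

(* Write K for Ind(C - F). Then Ind(C) is the deletion of the face F from K
   (the faces of K not containing F) and Ind(C : F) is the link of F in K.
   Since the relative chains of (K, del F) are the chains of the link shifted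
   by |F|, the long exact sequence of this pair gives
     conn_h (del F) >= min (conn_h K, conn_h (link F) + |F| - 1),
     conn_h K >= min (conn_h (del F), conn_h (link F) + |F|).
   The first inequality turns the recursion defining psi into
   psi <= conn_h(Ind) + 2 for every hypergraph, by induction on the number of
   edges.  For the splitting edge F of a properly-splitted hypergraph, the
   defining inequality conn_h(Ind(C : F)) >= conn_h(Ind C) - |F| + 1 and the
   second one give conn_h(Ind C) + 2 <= the F-branch of the recursion <= psi.
   The base cases are the full simplex, which is acyclic, and the void
   complex {emptyset}, whose connectivity is -2. *)

From mathcomp Require Import all_boot all_order all_algebra.
From mathcomp Require Import zify ring.
From Stdlib Require Import ClassicalEpsilon.
Set Implicit Arguments. Unset Strict Implicit. Unset Printing Implicit Defensive.
Import Order.TTheory GRing.Theory Num.Theory.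

Lemma xle_refl (a : xint) : xle a a.
Proof. by case: a => //= a. Qed.

Lemma xle_trans (a b c : xint) : xle a b -> xle b c -> xle a c.
Proof. by case: a => [a|]; case: b => [b|]; case: c => [c|] //=; lia. Qed.

Lemma xle_anti (a b : xint) : xle a b -> xle b a -> a = b.
Proof. by case: a => [a|]; case: b => [b|] //= h1 h2; congr Some; lia. Qed.

Lemma xle_maxl (a b : xint) : xle a (xmax a b).
Proof. by case: a => [a|]; case: b => [b|] //=; lia. Qed.

Lemma xle_maxr (a b : xint) : xle b (xmax a b).
Proof. by case: a => [a|]; case: b => [b|] //=; lia. Qed.

Lemma xmax_le (a b c : xint) : xle a c -> xle b c -> xle (xmax a b) c.
Proof. by case: a => [a|]; case: b => [b|]; case: c => [c|] //=; lia. Qed.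

Section XmaxOver.
Variables (I : eqType) (g : I -> xint).

Definition xmax_over (i0 : I) (s : seq I) := foldr (fun i acc => xmax (g i) acc) (g i0) s.

Lemma xmax_over_ge i0 s i : i \in i0 :: s -> xle (g i) (xmax_over i0 s).
Proof.
rewrite /xmax_over; elim: s i => [|j s IHs] i /=; first by rewrite inE => /eqP ->; apply: xle_refl.
rewrite !inE => /or3P [/eqP ->|/eqP ->|i_s]; [|exact: xle_maxl|];
  by apply: xle_trans (xle_maxr _ _); apply: IHs; rewrite ?mem_head // inE i_s orbT.
Qed.

Lemma xmax_over_le i0 s x : {in i0 :: s, forall i, xle (g i) x} -> xle (xmax_over i0 s) x.
Proof.
rewrite /xmax_over; elim: s => [|j s IHs] g_le /=; first by apply: g_le; rewrite mem_head.
apply: xmax_le; first by apply: g_le; rewrite !inE eqxx orbT.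
by apply: IHs => i; rewrite inE => /orP [/eqP ->|i_s]; apply: g_le; rewrite !inE ?eqxx ?i_s ?orbT.
Qed.

End XmaxOver.

Lemma eq_xmax_over (I : eqType) (g h : I -> xint) i0 s : {in i0 :: s, g =1 h} ->
  xmax_over g i0 s = xmax_over h i0 s.
Proof.
rewrite /xmax_over; elim: s => [|i s IHs] eq_gh /=; first by rewrite eq_gh ?mem_head.
rewrite eq_gh ?inE ?eqxx ?orbT // IHs // => j j_s; apply: eq_gh.
by move: j_s; rewrite !inE => /orP [->|->]; rewrite ?orbT.
Qed.

Section ConnectivityBounds.
Variable T : finType.
Implicit Types (D : {set {set T}}) (x : xint).

Lemma rhom_vanishP D k : reflect (rhom_vanish D k) (rhom_vanishb D k).
Proof. by rewrite /rhom_vanishb; case: excluded_middle_informative; constructor. Qed.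

Lemma conn_h_geP D x :
  xle x (conn_h D) <-> (forall n : nat, xle (Some (n%:Z - 1)%R) x -> rhom_vanish D n).
Proof.
rewrite /conn_h; case: excluded_middle_informative => [ex|nex]; last first.
  split=> // _ n _; apply/rhom_vanishP; apply: contraT => nv.
  by case: nex; exists n.
case: ex_minnP => k0 /rhom_vanishP nv0 k0_min.
case: x => [m|] /=; split.
- move=> le_m n le_n; apply/rhom_vanishP; apply: contraT => /k0_min; lia.
- by move=> h; apply: contraT; rewrite -ltNge => lt; case: nv0; apply: h; lia.
- by [].
- by move=> h; case: nv0; apply: h.
Qed.

Lemma conn_h_vanish D (n : nat) :
  xle (Some (n%:Z - 1)%R) (conn_h D) -> rhom_vanish D n.
Proof. exact: (proj1 (conn_h_geP D _) (xle_refl _)). Qed.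

Lemma conn_h_le D (k : nat) : ~ rhom_vanish D k -> xle (conn_h D) (Some (k%:Z - 2)%R).
Proof.
move=> nv; rewrite /conn_h; case: excluded_middle_informative => [ex|nex].
  case: ex_minnP => k0 _ k0_min /=.
  have : k0 <= k by apply: k0_min; apply/rhom_vanishP.
  lia.
by case: nex; exists k; apply/rhom_vanishP.
Qed.

End ConnectivityBounds.

Section Chains.
Variable T : finType.
Implicit Types (K : {set {set T}}) (c d : {set T} -> int) (t A B : {set T}).

Lemma cardsU_disjoint A B : [disjoint A & B] -> #|A :|: B| = #|A| + #|B|.
Proof. by move=> disAB; apply/eqP; rewrite (leq_card_setU A B).2. Qed.

Lemma bsign_sqr (v : T) t : (bsign v t * bsign v t = 1)%R.
Proof. by rewrite /bsign -exprD -signr_odd addnn odd_double. Qed.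

Lemma bsignU1 (v u : T) t : u \notin t ->
  bsign v (u |: t) = ((if (enum_rank u < enum_rank v)%N then -1 else 1) * bsign v t)%R.
Proof.
move=> ut; rewrite /bsign; case: ifP => lt_uv.
  have -> : [set x in u |: t | enum_rank x < enum_rank v] =
            u |: [set x in t | enum_rank x < enum_rank v].
    by apply/setP => x; rewrite !inE; case: eqP => [->|].
  by rewrite cardsU1 inE (negbTE ut) /= exprS.
have -> : [set x in u |: t | enum_rank x < enum_rank v] =
          [set x in t | enum_rank x < enum_rank v].
  by apply/setP => x; rewrite !inE; case: eqP => [->|] //=; rewrite lt_uv (negbTE ut).
by rewrite mul1r.
Qed.

Lemma bsignU (v : T) A B : [disjoint A & B] ->
  bsign v (A :|: B) = (bsign v A * bsign v B)%R.
Proof.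
move=> disAB; rewrite /bsign -exprD -cardsU_disjoint; last first.
  have sub (X : {set T}) : [set x in X | enum_rank x < enum_rank v] \subset X.
    by apply/subsetP => x; rewrite inE => /andP [].
  exact: disjointWl (sub A) (disjointWr (sub B) disAB).
by congr (_ ^+ _)%R; apply: eq_card => x; rewrite !inE andb_orl.
Qed.

Lemma eq_bd c d : c =1 d -> bd c =1 bd d.
Proof. by move=> eq_cd t; apply: eq_bigr => v _; rewrite eq_cd. Qed.

Lemma bdB c d : bd (c \- d)%R =1 (bd c \- bd d)%R.
Proof. by move=> t; rewrite /bd /= -sumrB; apply: eq_bigr => v _; rewrite /= mulrBl. Qed.

Lemma bdD c d : bd (c \+ d)%R =1 (bd c \+ bd d)%R.
Proof. by move=> t; rewrite /bd /= -big_split; apply: eq_bigr => v _; rewrite /= mulrDl. Qed.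

Lemma bd0 : bd (fun _ : {set T} => 0%R) =1 (fun=> 0%R).
Proof. by move=> t; rewrite /bd big1 // => v _; rewrite mul0r. Qed.

Lemma ltn_enum_rankN (v w : T) : v != w ->
  (enum_rank v < enum_rank w) = ~~ (enum_rank w < enum_rank v).
Proof.
move=> vw; rewrite -leqNgt ltn_neqAle andb_idl // => _.
by apply: contra vw => /eqP /val_inj /enum_rank_inj ->.
Qed.

(* Each face [v |: (w |: t)] contributes twice to [bd (bd c) t], with opposite signs. *)
Lemma bd_bd c : bd (bd c) =1 (fun=> 0%R).
Proof.
move=> t.
pose f v w := (if (v \notin t) && (w \notin t) && (w != v) then
   c (w |: (v |: t)) * bsign w (v |: t) * bsign v t else 0)%R.
have -> : (bd (bd c) t = \sum_v \sum_w f v w)%R.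
  rewrite /bd big_mkcond; apply: eq_bigr => v _ /=; rewrite mulr_suml big_mkcond.
  case: ifP => vt; last by symmetry; apply: big1 => w _; rewrite /f vt.
  by apply: eq_bigr => w _; rewrite /f vt in_setU1 negb_or /= eq_sym andbC.
have f_anti v w : f v w = (- f w v)%R.
  rewrite /f; case vt: (v \in t); case wt: (w \in t); rewrite /= ?oppr0 //.
  have [->|wv] := eqVneq w v; first by rewrite oppr0.
  rewrite setUCA !bsignU1 ?vt ?wt // (ltn_enum_rankN wv).
  by case: (enum_rank v < enum_rank w) => /=; ring.
have : (\sum_v \sum_w f v w = - \sum_v \sum_w f v w)%R.
  rewrite [LHS]exchange_big -sumrN; apply: eq_bigr => w _; rewrite -sumrN.
  by apply: eq_bigr => v _; apply: f_anti.
set S := (\sum_v \sum_w f v w)%R; lia.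
Qed.

Definition down_closed K := forall s t : {set T}, s \in K -> t \subset s -> t \in K.

Lemma is_chain_bd K k c : down_closed K -> is_chain K k.+1 c -> is_chain K k (bd c).
Proof.
move=> K_down ch t; case: (boolP [exists v, (v \notin t) && (c (v |: t) != 0%R)]).
  move=> /existsP [v /andP [vt /ch [inK sz]]] _; split.
    exact: K_down inK (subsetUr _ _).
  by move: sz; rewrite cardsU1 vt add1n => [[]].
move=> /existsPn c0; rewrite /bd big1 ?eqxx // => v vt.
by move: (c0 v); rewrite vt /= negbK => /eqP ->; rewrite mul0r.
Qed.

Lemma is_chainB K k c d : is_chain K k c -> is_chain K k d -> is_chain K k (c \- d)%R.
Proof.
move=> ch_c ch_d s /=; have [-> | /ch_c //] := eqVneq (c s) 0%R.
by rewrite sub0r oppr_eq0 => /ch_d.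
Qed.

Lemma is_chainD K k c d : is_chain K k c -> is_chain K k d -> is_chain K k (c \+ d)%R.
Proof.
move=> ch_c ch_d s /=; have [-> | /ch_c //] := eqVneq (c s) 0%R.
by rewrite add0r => /ch_d.
Qed.

Lemma is_chain0 K k : is_chain K k (fun=> 0%R).
Proof. by move=> s; rewrite eqxx. Qed.

End Chains.

Section DeletionLink.
Variable T : finType.
Implicit Types (K : {set {set T}}) (c d e : {set T} -> int) (s t F : {set T}).

Lemma setUDK F s : F \subset s -> F :|: (s :\: F) = s.
Proof. by move=> sFs; rewrite setDE setUIr setUCr setIT; apply/setUidPr. Qed.

Lemma setUKD F t : [disjoint t & F] -> (F :|: t) :\: F = t.
Proof. by move=> dis; rewrite setDUl setDv set0U; apply/setDidPl. Qed.

Lemma disjoint_setD F s : [disjoint s :\: F & F].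
Proof. by have := subxx (s :\: F); rewrite subsetD => /andP []. Qed.

Lemma disjointU1 (v : T) t F : [disjoint v |: t & F] = (v \notin F) && [disjoint t & F].
Proof. by rewrite -!setI_eq0 setIUl setU_eq0 setI_eq0 disjoints1. Qed.

Definition del_face K F := [set s in K | ~~ (F \subset s)].
Definition link K F := [set t : {set T} | [disjoint t & F] && (F :|: t \in K)].

Section FixedFace.
Variables (K : {set {set T}}) (F : {set T}).
Hypothesis K_down : down_closed K.

Definition link_sign t := (\prod_(u in t) bsign u F)%R.

(* The signs [link_sign] make [restr_link] commute with [bd] (a chain map
   lowering the number of vertices by [#|F|]); [join_face] is a right inverse. *)
Definition restr_link c t :=
  if [disjoint t & F] then (link_sign t * c (F :|: t))%R else 0%R.
Definition join_face e s :=
  if F \subset s then (link_sign (s :\: F) * e (s :\: F))%R else 0%R.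

Lemma link_sign_sqr t : (link_sign t * link_sign t = 1)%R.
Proof. by rewrite /link_sign -big_split /=; apply: big1 => u _; rewrite bsign_sqr. Qed.

Lemma link_sign_neq0 t : link_sign t != 0%R.
Proof. by apply/eqP => t0; move: (link_sign_sqr t); rewrite t0 mul0r. Qed.

Lemma link_signU1 (v : T) t : v \notin t -> link_sign (v |: t) = (bsign v F * link_sign t)%R.
Proof. by move=> vt; rewrite /link_sign big_setU1. Qed.

Lemma bd_restr_link c : bd (restr_link c) =1 restr_link (bd c).
Proof.
move=> t; rewrite /restr_link /bd; case: ifP => dis; last first.
  by rewrite big1 // => v vt; rewrite disjointU1 dis andbF mul0r.
rewrite big_mkcond mulr_sumr [in RHS]big_mkcond; apply: eq_bigr => v _ /=.
case vt: (v \in t) => /=; first by rewrite in_setU vt orbT.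
rewrite disjointU1 dis andbT in_setU vt orbF.
case vF: (v \in F) => /=; first by rewrite mul0r.
rewrite (link_signU1 (negbT vt)) setUCA bsignU; last by rewrite disjoint_sym.
ring.
Qed.

Lemma restr_linkB c d : restr_link (c \- d)%R =1 (restr_link c \- restr_link d)%R.
Proof. by move=> t; rewrite /restr_link /=; case: ifP => _; rewrite ?mulrBr ?subr0. Qed.

Lemma eq_restr_link c d : c =1 d -> restr_link c =1 restr_link d.
Proof. by move=> eq_cd t; rewrite /restr_link eq_cd. Qed.

Lemma restr_join_face e : (forall t, e t != 0%R -> [disjoint t & F]) ->
  restr_link (join_face e) =1 e.
Proof.
move=> e_dis t; rewrite /restr_link /join_face; case: ifP => dis.
  by rewrite subsetUl setUKD // mulrA link_sign_sqr mul1r.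
by have [//|/e_dis] := eqVneq (e t) 0%R; rewrite dis.
Qed.

Lemma restr_link_neq0 k c t : is_chain K k c -> restr_link c t != 0%R ->
  [/\ [disjoint t & F], F :|: t \in K & #|F| + #|t| = k].
Proof.
move=> ch; rewrite /restr_link; case: ifP => dis; last by rewrite eqxx.
rewrite mulf_eq0 negb_or => /andP [_ /ch [inK sz]].
by split => //; rewrite -cardsU_disjoint // disjoint_sym.
Qed.

Lemma is_chain_restr_link k c : is_chain K k c -> is_chain (link K F) (k - #|F|) (restr_link c).
Proof.
move=> ch t /(restr_link_neq0 ch) [dis inK sz]; split; last by lia.
by rewrite inE dis inK.
Qed.

Lemma is_chain_join_face m e : is_chain (link K F) m e -> is_chain K (m + #|F|) (join_face e).
Proof.
move=> ch s; rewrite /join_face; case: ifP => sFs; last by rewrite eqxx.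
rewrite mulf_eq0 negb_or => /andP [_ /ch []]; rewrite inE => /andP [dis].
rewrite setUDK // => inK sz; split => //.
by rewrite -(setUDK sFs) cardsU_disjoint ?sz 1?addnC // disjoint_sym disjoint_setD.
Qed.

Lemma is_chain_del k c : is_chain K k c -> restr_link c =1 (fun=> 0%R) ->
  is_chain (del_face K F) k c.
Proof.
move=> ch c_del s cs; have [inK sz] := ch s cs; split => //.
rewrite inE inK /=; apply/negP => sFs.
move: (c_del (s :\: F)); rewrite /restr_link disjoint_setD setUDK // => /eqP.
by rewrite mulf_eq0 (negbTE (link_sign_neq0 _)) (negbTE cs).
Qed.

Lemma is_chain_of_del k c : is_chain (del_face K F) k c -> is_chain K k c.
Proof. by move=> ch s /ch []; rewrite inE => /andP []. Qed.

Lemma restr_link_del k c : is_chain (del_face K F) k c -> restr_link c =1 (fun=> 0%R).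
Proof.
move=> ch t; rewrite /restr_link; case: ifP => // dis.
have [->|/ch []] := eqVneq (c (F :|: t)) 0%R; first by rewrite mulr0.
by rewrite inE subsetUl andbF.
Qed.

Lemma restr_link0 : restr_link (fun=> 0%R) =1 (fun=> 0%R).
Proof. by move=> t; rewrite /restr_link; case: ifP; rewrite ?mulr0. Qed.

(* The connecting-map step of the long exact sequence of the pair
   [(K, del_face K F)], whose relative chains are the link chains shifted by [#|F|]. *)
Lemma del_chain_up_to_bd k c : is_chain K k c ->
  (forall t, bd (restr_link c) t = 0%R) ->
  (#|F| <= k -> rhom_vanish (link K F) (k - #|F|)) ->
  exists2 d, is_chain K k.+1 d & is_chain (del_face K F) k (c \- bd d)%R.
Proof.
move=> ch cyc vL; have [le_Fk | lt_kF] := leqP #|F| k; last first.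
  exists (fun=> 0%R); first exact: is_chain0.
  apply: is_chain_del; first by apply: is_chainB ch (is_chain_bd K_down (is_chain0 K k.+1)).
  move=> t; rewrite restr_linkB /= (eq_restr_link (@bd0 T)) restr_link0 subr0.
  by apply/eqP; apply: contraT => /(restr_link_neq0 ch) [_ _]; lia.
have [e [ch_e bd_e]] := vL le_Fk _ (is_chain_restr_link ch) cyc.
have e_dis t : e t != 0%R -> [disjoint t & F].
  by move=> /ch_e []; rewrite inE => /andP [].
have ch_d : is_chain K k.+1 (join_face e).
  have -> : k.+1 = (k - #|F|).+1 + #|F| by lia.
  exact: is_chain_join_face ch_e.
exists (join_face e) => //.
apply: is_chain_del; first exact: is_chainB ch (is_chain_bd K_down ch_d).
move=> t; rewrite restr_linkB /= -bd_restr_link (eq_bd (restr_join_face e_dis)).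
by rewrite bd_e subrr.
Qed.

Lemma rhom_vanish_del n : rhom_vanish K n ->
  (#|F| <= n.+1 -> rhom_vanish (link K F) (n.+1 - #|F|)) ->
  rhom_vanish (del_face K F) n.
Proof.
move=> vK vL c ch cyc; have [d [ch_d bd_d]] := vK c (is_chain_of_del ch) cyc.
have cyc_d t : bd (restr_link d) t = 0%R.
  by rewrite bd_restr_link (eq_restr_link bd_d) (restr_link_del ch).
have [d' ch_d' del_d] := del_chain_up_to_bd ch_d cyc_d vL.
by exists (d \- bd d')%R; split => // s; rewrite bdB /= bd_bd bd_d subr0.
Qed.

Lemma rhom_vanish_of_del n : rhom_vanish (del_face K F) n ->
  (#|F| <= n -> rhom_vanish (link K F) (n - #|F|)) ->
  rhom_vanish K n.
Proof.
move=> vD vL c ch cyc.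
have cyc_c t : bd (restr_link c) t = 0%R.
  by rewrite bd_restr_link (eq_restr_link cyc) restr_link0.
have [d ch_d del_c] := del_chain_up_to_bd ch cyc_c vL.
have [g [ch_g bd_g]] := vD _ del_c (fun t => ltac:(by rewrite bdB /= bd_bd cyc subr0)).
exists (g \+ d)%R; split; first exact: is_chainD (is_chain_of_del ch_g) ch_d.
by move=> s; rewrite bdD /= bd_g /= subrK.
Qed.

Lemma conn_h_del : xle (xmin (conn_h K) (xaddz (conn_h (link K F)) (#|F|%:Z - 1)%R))
                       (conn_h (del_face K F)).
Proof.
apply/conn_h_geP => n le_n; apply: rhom_vanish_del => [|le_Fn]; apply: conn_h_vanish;
  by move: le_n; case: (conn_h K) => [a|]; case: (conn_h (link K F)) => [b|] //=; lia.
Qed.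

Lemma conn_h_of_del : xle (xmin (conn_h (del_face K F)) (xaddz (conn_h (link K F)) #|F|%:Z))
                          (conn_h K).
Proof.
apply/conn_h_geP => n le_n; apply: rhom_vanish_of_del => [|le_Fn]; apply: conn_h_vanish;
  by move: le_n; case: (conn_h (del_face K F)) => [a|]; case: (conn_h (link K F)) => [b|] //=; lia.
Qed.

End FixedFace.

End DeletionLink.

Section Simplex.
Variable T : finType.
Implicit Types (V s t : {set T}) (c : {set T} -> int).

Lemma in_Ind_set0 V s : (s \in Ind V set0) = (s \subset V).
Proof. by rewrite inE andb_idr // => _; apply/forall_inP => E; rewrite inE. Qed.

Section Cone.
Variables (V : {set T}) (v : T).
Hypothesis v_min : forall w, w \in V -> enum_rank v <= enum_rank w.

Definition cone c s := if v \in s then c (s :\ v) else 0%R.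

Lemma bsign_min t : t \subset V -> bsign v t = 1%R.
Proof.
move=> /subsetP tV; rewrite /bsign (_ : [set x in t | _] = set0) ?cards0 //.
by apply/setP => x; rewrite !inE; apply/negbTE/andP => [[/tV/v_min]]; rewrite ltnNge => ->.
Qed.

Lemma min_ltn_enum_rank w : w \in V -> w != v -> enum_rank v < enum_rank w.
Proof.
move=> wV wv; rewrite ltn_neqAle v_min // andbT.
by apply: contra wv => /eqP /val_inj /enum_rank_inj ->.
Qed.

(* The cone over the first vertex [v] is a chain homotopy from the identity to 0. *)
Lemma bd_cone k c : is_chain (Ind V set0) k c -> bd (cone c) =1 (c \- cone (bd c))%R.
Proof.
move=> ch t; have c_sub s : c s != 0%R -> s \subset V.
  by move=> /ch []; rewrite in_Ind_set0.
rewrite /= {1}/bd /cone; case: ifP => vt; last first.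
  rewrite subr0 (bigD1 v) ?vt //= setU11 setU1K ?vt // big1 ?addr0 => [|w /andP [_ wv]].
    by have [->|/c_sub/bsign_min ->] := eqVneq (c t) 0%R; rewrite ?mul0r ?mulr1.
  by rewrite in_setU1 eq_sym (negbTE wv) vt mul0r.
set t' := t :\ v; have tE : t = v |: t' by rewrite setD1K.
have vt' : v \notin t' by rewrite !inE eqxx.
have ct : (c t * bsign v t' = c t)%R.
  have [->|/c_sub tV] := eqVneq (c t) 0%R; first by rewrite mul0r.
  by rewrite bsign_min ?mulr1 // (subset_trans (subD1set t v)).
rewrite [in RHS]/bd [in RHS](bigD1 v) //= -tE ct opprD addrA subrr add0r -sumrN.
apply: eq_big => [w | w wt]; first by rewrite tE in_setU1 negb_or andbC.
have wv : w != v by apply: contraNneq wt => ->.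
rewrite in_setU1 vt orbT.
have -> : (w |: t) :\ v = w |: t' by rewrite tE setUCA setU1K // in_setU1 negb_or eq_sym wv.
rewrite tE bsignU1 //.
have [->|/c_sub] := eqVneq (c (w |: t')) 0%R; first by rewrite !mul0r oppr0.
rewrite subUset sub1set => /andP [wV _].
by rewrite min_ltn_enum_rank // mulN1r mulrN.
Qed.

End Cone.

Lemma rhom_vanish_simplex V n : V != set0 -> rhom_vanish (Ind V set0) n.
Proof.
case/set0Pn => v0 v0V; have [v vV v_min] := arg_minnP (fun u => enum_rank u : nat) v0V.
have {}vV : v \in V := vV.
move=> c ch cyc; exists (cone v c); split => [s|t].
  rewrite /cone; case: ifP => vs // /ch []; rewrite !in_Ind_set0 => sV sz; split.
    by rewrite -(setD1K vs) subUset sub1set vV.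
  by rewrite (cardsD1 v s) vs sz.
by rewrite (bd_cone v_min ch) /= /cone; case: ifP; rewrite ?cyc subr0.
Qed.

Lemma not_rhom_vanish_void : ~ rhom_vanish (Ind set0 (set0 : {set {set T}})) 0.
Proof.
have setU1_neq0 (w : T) t : w |: t != set0 by apply/set0Pn; exists w; rewrite setU11.
pose c s : int := if s == set0 then 1%R else 0%R.
have ch : is_chain (Ind set0 set0) 0 c.
  move=> s; rewrite /c; have [-> _|] := eqVneq s set0; last by rewrite eqxx.
  by rewrite in_Ind_set0 sub0set cards0.
have cyc t : bd c t = 0%R.
  by rewrite /bd big1 // => w _; rewrite /c (negbTE (setU1_neq0 w t)) mul0r.
move=> /(_ c ch cyc) [d [ch_d /(_ set0)]]; rewrite /c eqxx /bd big1 // => w _.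
have [-> | /ch_d []] := eqVneq (d (w |: set0)) 0%R; first by rewrite mul0r.
by rewrite in_Ind_set0 subset0 (negbTE (setU1_neq0 w set0)).
Qed.

Lemma conn_h_simplex V : V != set0 -> conn_h (Ind V set0) = None.
Proof.
move=> V0; have := proj2 (conn_h_geP _ None) (fun n _ => rhom_vanish_simplex V0).
by case: (conn_h _).
Qed.

Lemma conn_h_void : conn_h (Ind set0 (set0 : {set {set T}})) = Some (-2)%R.
Proof.
apply: xle_anti; first exact: conn_h_le not_rhom_vanish_void.
by apply/conn_h_geP => n /=; lia.
Qed.

End Simplex.

Section HypergraphOperations.
Variable T : finType.
Implicit Types (V F E D t s : {set T}) (C : {set {set T}}).

Definition hcolon_family C F := [set E :\: F | E in hdel C F].

Lemma in_hcolonC C F D : (D \in hcolonC C F) =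
  [&& D \in hcolon_family C F,
      [forall D' in hcolon_family C F, (D' \subset D) ==> (D' == D)] & 2 <= #|D|].
Proof. by rewrite inE. Qed.

Lemma Ind_down V C : down_closed (Ind V C).
Proof.
move=> s t; rewrite !inE => /andP [sV /forall_inP s_ind] ts; rewrite (subset_trans ts sV) /=.
by apply/forall_inP => E EC; apply: contra (s_ind E EC) => /subset_trans; apply.
Qed.

Lemma Ind_hdel V C F : F \in C -> Ind V C = del_face (Ind V (hdel C F)) F.
Proof.
move=> FC; apply/setP => s; rewrite !inE; case: (s \subset V) => //=.
apply/forall_inP/andP => [s_ind | [/forall_inP s_ind sF] E EC].
  by split; [apply/forall_inP => E; rewrite !inE => /andP [_ /s_ind] | exact: s_ind].
by have [->//|EF] := eqVneq E F; apply: s_ind; rewrite !inE EF.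
Qed.

Lemma hypergraph_hdel V C F : is_hypergraph V C -> is_hypergraph V (hdel C F).
Proof.
move=> [C_edges C_antichain]; split => [E|E E']; rewrite !inE.
  by move=> /andP [_ /C_edges].
by move=> /andP [_ EC] /andP [_ E'C]; apply: C_antichain.
Qed.

Lemma hypergraph_set0 C : is_hypergraph set0 C -> C = set0.
Proof.
move=> [C_edges _]; apply/setP => E; rewrite inE; apply/negP => /C_edges [].
by rewrite subset0 => /eqP ->; rewrite cards0.
Qed.

Lemma card_hdel C F : F \in C -> #|hdel C F| < #|C|.
Proof. by move=> FC; rewrite (cardsD1 F C) FC. Qed.

Lemma card_hcolonC C F : F \in C -> #|hcolonC C F| < #|C|.
Proof.
move=> FC; apply: leq_ltn_trans (card_hdel FC).
apply: (@leq_trans #|hcolon_family C F|); last exact: leq_imset_card.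
by apply: subset_leq_card; apply/subsetP => D; rewrite in_hcolonC => /and3P [].
Qed.

Section Colon.
Variables (V : {set T}) (C : {set {set T}}) (F : {set T}).
Hypotheses (C_hyp : is_hypergraph V C) (FC : F \in C).

Lemma hcolon_family_neq0 D : D \in hcolon_family C F -> D != set0.
Proof.
case/imsetP => E; rewrite !inE => /andP [EF EC] ->; rewrite setD_eq0.
by apply: contra EF => EF; apply/eqP; apply: C_hyp.2.
Qed.

Lemma hcolon_family_min E : E \in hdel C F -> exists D, [/\ D \in hcolon_family C F,
  D \subset E :\: F & forall D', D' \in hcolon_family C F -> D' \subset D -> D' = D].
Proof.
move=> EC; pose below := [set D in hcolon_family C F | D \subset E :\: F].
have EFb : E :\: F \in below by rewrite inE subxx andbT; apply/imsetP; exists E.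
have [D Db D_min] := arg_minnP (fun D => #|D|) EFb.
have : D \in below := Db; rewrite inE => /andP [Dfam DE].
exists D; split => // D' D'fam D'D; apply/eqP; rewrite eqEcard D'D D_min //.
suff : D' \in below by [].
by rewrite inE D'fam (subset_trans D'D DE).
Qed.

Lemma hnbhd_edge x E : E \in C -> #|E :\: F| == 1 -> x \in E :\: F ->
  E :\: F = [set x] /\ E \in hdel C F.
Proof.
move=> EC /cards1P [y Ey]; rewrite Ey inE => /eqP ->; split => //.
rewrite !inE EC andbT; apply/eqP => EF.
by move: Ey; rewrite EF setDv => /setP /(_ y); rewrite !inE eqxx.
Qed.

Lemma notin_hnbhd x D : D \in hcolonC C F -> x \in D -> x \notin hnbhd C F.
Proof.
rewrite in_hcolonC => /and3P [Dfam /forall_inP D_min D2] xD.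
apply/bigcupP => [[E /andP [EC E1] xE]]; have [Ex EC'] := hnbhd_edge EC E1 xE.
have /eqP x_D : [set x] == D.
  by apply: (implyP (D_min _ _)); [apply/imsetP; exists E | rewrite sub1set].
by move: D2; rewrite -x_D cards1.
Qed.

Lemma hypergraph_hcolon : is_hypergraph (hcolonV V C F) (hcolonC C F).
Proof.
split => [D DC | D D']; last first.
  rewrite !in_hcolonC => /and3P [Dfam _ _] /and3P [_ /forall_inP D'_min _] DD'.
  by apply/eqP; apply: (implyP (D'_min _ Dfam)).
have D2 : 2 <= #|D| by move: DC; rewrite in_hcolonC => /and3P [].
split => //; move: (DC); rewrite in_hcolonC => /and3P [/imsetP [E]].
rewrite !inE => /andP [_ EC] DE _ _; apply/subsetP => x xD.
have [xE xF] : x \in E /\ x \notin F by move: xD; rewrite DE inE => /andP [].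
rewrite !inE negb_or xF (notin_hnbhd DC xD) /=.
by apply: (subsetP (C_hyp.1 E EC).1).
Qed.

Lemma link_of_Ind_hcolon t : t \in Ind (hcolonV V C F) (hcolonC C F) ->
  t \in link (Ind V (hdel C F)) F.
Proof.
have FV : F \subset V := (C_hyp.1 F FC).1.
rewrite !inE => /andP [tVNF /forall_inP t_ind].
have t_out x : x \in t -> [/\ x \in V, x \notin F & x \notin hnbhd C F].
  by move=> /(subsetP tVNF); rewrite !inE negb_or => /andP [/andP [-> ->] ->].
have tV : t \subset V by apply/subsetP => x /t_out [].
have dis : [disjoint t & F].
  by rewrite -setI_eq0; apply/set0Pn => -[x /setIP [/t_out [_ /negP xF _]]].
rewrite dis subUset FV tV /=; apply/forall_inP => E EC; rewrite -subDset.
apply/negP => EFt; have [D [Dfam DE D_min]] := hcolon_family_min EC.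
have Dt : D \subset t := subset_trans DE EFt.
have [D2 | D1] := leqP 2 #|D|.
  suff /t_ind : D \in hcolonC C F by rewrite Dt.
  rewrite in_hcolonC Dfam D2 andbT; apply/forall_inP => D' D'fam.
  by apply/implyP => /(D_min _ D'fam) ->.
have /cards1P [x Dx] : #|D| == 1.
  by move: (hcolon_family_neq0 Dfam); rewrite -card_gt0; lia.
have xt : x \in t by apply: (subsetP Dt); rewrite Dx set11.
have [_ _ /negP] := t_out x xt; apply.
case/imsetP: Dfam => E'; rewrite !inE => /andP [_ E'C] DE'.
by apply/bigcupP; exists E'; rewrite -DE' Dx ?E'C ?cards1 ?set11.
Qed.

Lemma Ind_hcolon_of_link t : t \in link (Ind V (hdel C F)) F ->
  t \in Ind (hcolonV V C F) (hcolonC C F).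
Proof.
rewrite !inE => /andP [dis /andP [FtV /forall_inP Ft_ind]]; apply/andP; split.
  apply/subsetP => x xt; rewrite !inE negb_or.
  have xV : x \in V by apply: (subsetP FtV); rewrite inE xt orbT.
  rewrite xV andbT (disjointFr dis xt) /=.
  apply/bigcupP => [[E /andP [EC E1] xE]]; have [Ex EC'] := hnbhd_edge EC E1 xE.
  by move: (Ft_ind E EC'); rewrite -subDset Ex sub1set xt.
apply/forall_inP => D; rewrite in_hcolonC => /and3P [/imsetP [E EC' ->] _ _].
by rewrite subDset; apply: Ft_ind.
Qed.

Lemma Ind_hcolon : Ind (hcolonV V C F) (hcolonC C F) = link (Ind V (hdel C F)) F.
Proof. by apply/setP => t; apply/idP/idP => [/link_of_Ind_hcolon|/Ind_hcolon_of_link]. Qed.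

End Colon.

End HypergraphOperations.

Section PsiRecursion.
Variable T : finType.
Implicit Types (V F : {set T}) (C : {set {set T}}).

Definition psi_branch_fuel n V C F := xmin (psi_fuel n V (hdel C F))
  (xaddz (psi_fuel n (hcolonV V C F) (hcolonC C F)) (#|F|%:Z - 1)%R).

Definition psi_branch V C F := xmin (psi V (hdel C F))
  (xaddz (psi (hcolonV V C F) (hcolonC C F)) (#|F|%:Z - 1)%R).

Lemma psi_fuelS n V C : psi_fuel n.+1 V C =
  if V == set0 then Some 0%R else if C == set0 then None else
  if enum C is F0 :: Fs then xmax_over (psi_branch_fuel n V C) F0 Fs else None.
Proof. by []. Qed.

Lemma psi_fuel_set0 n V : psi_fuel n V set0 = if V == set0 then Some 0%R else None.
Proof. by case: n => [|n] /=; rewrite eqxx; case: (V == set0). Qed.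

Lemma psi_fuel_enough n m V C : #|C| <= n -> #|C| <= m -> psi_fuel n V C = psi_fuel m V C.
Proof.
have card0 (D : {set {set T}}) : #|D| <= 0 -> D = set0.
  by rewrite leqn0 cards_eq0 => /eqP.
elim: n m V C => [|n IHn] m V C le_n le_m; first by rewrite (card0 C le_n) !psi_fuel_set0.
case: m le_m => [|m] le_m; first by rewrite (card0 C le_m) !psi_fuel_set0.
rewrite !psi_fuelS; case: (V == set0) (C == set0) => [|] [|] //.
case enumC: (enum C) => [|F0 Fs] //; apply: eq_xmax_over => F F_enum.
have FC : F \in C by rewrite -mem_enum enumC.
have := card_hdel FC; have := card_hcolonC FC => lt_colon lt_del.
by rewrite /psi_branch_fuel !(IHn m) //; lia.
Qed.

Lemma psi_set0V C : psi set0 C = Some 0%R.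
Proof. by rewrite /psi; case: #|C| => [|n] /=; rewrite eqxx. Qed.

Lemma psi_set0C V : V != set0 -> psi V set0 = None.
Proof. by move=> V0; rewrite /psi psi_fuel_set0 (negbTE V0). Qed.

Lemma psi_unfold V C : V != set0 -> C != set0 ->
  exists F0 Fs, C =i F0 :: Fs /\ psi V C = xmax_over (psi_branch V C) F0 Fs.
Proof.
move=> V0 C0; rewrite /psi; have : 0 < #|C| by rewrite card_gt0.
case cardC: #|C| => [//|n] _; rewrite psi_fuelS (negbTE V0) (negbTE C0).
case enumC: (enum C) => [|F0 Fs].
  by case/set0Pn: C0 => F; rewrite -mem_enum enumC.
exists F0, Fs; split => [F|]; first by rewrite -mem_enum enumC.
apply: eq_xmax_over => F F_enum.
have FC : F \in C by rewrite -mem_enum enumC.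
have := card_hdel FC; have := card_hcolonC FC => lt_colon lt_del.
rewrite /psi_branch_fuel /psi_branch /psi (@psi_fuel_enough n #|hdel C F|) //; last lia.
by rewrite (@psi_fuel_enough n #|hcolonC C F|) //; lia.
Qed.

Lemma psi_le V C x : V != set0 -> C != set0 ->
  {in C, forall F, xle (psi_branch V C F) x} -> xle (psi V C) x.
Proof.
move=> V0 C0 branch_le; have [F0 [Fs [eqC ->]]] := psi_unfold V0 C0.
by apply: xmax_over_le => F; rewrite -eqC; apply: branch_le.
Qed.

Lemma psi_branch_le V C F : V != set0 -> F \in C -> xle (psi_branch V C F) (psi V C).
Proof.
move=> V0 FC; have C0 : C != set0 by apply/set0Pn; exists F.
by have [F0 [Fs [eqC ->]]] := psi_unfold V0 C0; apply: xmax_over_ge; rewrite -eqC.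
Qed.

End PsiRecursion.

Section PsiConnectivity.
Variable T : finType.
Implicit Types (V F : {set T}) (C : {set {set T}}).

Lemma psi_base V C : is_hypergraph V C -> (V == set0) || (C == set0) ->
  psi V C = xaddz (conn_h (Ind V C)) 2%R.
Proof.
move=> C_hyp; have [V0 _ | V0 /= /eqP C0] := eqVneq V set0.
  by move: C_hyp; rewrite V0 psi_set0V => /hypergraph_set0 ->; rewrite conn_h_void.
by rewrite C0 psi_set0C // conn_h_simplex.
Qed.

Lemma psi_branch_le_conn V C F : is_hypergraph V C -> F \in C ->
  xle (psi V (hdel C F)) (xaddz (conn_h (Ind V (hdel C F))) 2%R) ->
  xle (psi (hcolonV V C F) (hcolonC C F))
      (xaddz (conn_h (Ind (hcolonV V C F) (hcolonC C F))) 2%R) ->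
  xle (psi_branch V C F) (xaddz (conn_h (Ind V C)) 2%R).
Proof.
move=> C_hyp FC; rewrite /psi_branch (Ind_hdel V FC) (Ind_hcolon C_hyp FC).
have := conn_h_del F (@Ind_down _ V (hdel C F)).
case: (psi V _) => [a|]; case: (psi _ _) => [b|];
  case: (conn_h (Ind V _)) => [k|]; case: (conn_h (link _ _)) => [l|];
  case: (conn_h (del_face _ _)) => [z|] //=; lia.
Qed.

Lemma conn_le_psi_branch V C F : is_hypergraph V C -> F \in C ->
  xle (xaddz (conn_h (Ind V C)) (1 - #|F|%:Z)%R)
      (conn_h (Ind (hcolonV V C F) (hcolonC C F))) ->
  xle (xaddz (conn_h (Ind V (hdel C F))) 2%R) (psi V (hdel C F)) ->
  xle (xaddz (conn_h (Ind (hcolonV V C F) (hcolonC C F))) 2%R)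
      (psi (hcolonV V C F) (hcolonC C F)) ->
  xle (xaddz (conn_h (Ind V C)) 2%R) (psi_branch V C F).
Proof.
move=> C_hyp FC; rewrite /psi_branch (Ind_hdel V FC) (Ind_hcolon C_hyp FC).
have := conn_h_of_del F (@Ind_down _ V (hdel C F)).
case: (psi V _) => [a|]; case: (psi _ _) => [b|];
  case: (conn_h (Ind V _)) => [k|]; case: (conn_h (link _ _)) => [l|];
  case: (conn_h (del_face _ _)) => [z|] //=; lia.
Qed.

Lemma psi_le_conn V C : is_hypergraph V C -> xle (psi V C) (xaddz (conn_h (Ind V C)) 2%R).
Proof.
have [n lt_Cn] := ubnP #|C|; elim: n V C lt_Cn => [|n IHn] V C; first by rewrite ltn0.
move=> lt_Cn C_hyp; have [base | ] := boolP ((V == set0) || (C == set0)).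
  by rewrite psi_base //; apply: xle_refl.
rewrite negb_or => /andP [V0 C0]; apply: psi_le => // F FC.
have := card_hdel FC; have := card_hcolonC FC => lt_colon lt_del.
apply: psi_branch_le_conn => //.
  by apply: IHn; [lia | exact: hypergraph_hdel].
by apply: IHn; [lia | exact: hypergraph_hcolon].
Qed.

Lemma conn_le_psi V C : is_hypergraph V C -> properly_splitted V C ->
  xle (xaddz (conn_h (Ind V C)) 2%R) (psi V C).
Proof.
move=> C_hyp ps; elim: ps C_hyp => {V C} [V | V C F FC conn_colon _ IH_del _ IH_colon] C_hyp.
  by rewrite psi_base ?eqxx ?orbT //; apply: xle_refl.
have V0 : V != set0.
  by apply/eqP => V0; move: C_hyp FC; rewrite V0 => /hypergraph_set0 ->; rewrite inE.
apply: xle_trans (psi_branch_le V0 FC); apply: conn_le_psi_branch => //.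
  exact: IH_del (hypergraph_hdel F C_hyp).
exact: IH_colon (hypergraph_hcolon F C_hyp).
Qed.

End PsiConnectivity.

Theorem theorem3p15 (T : finType) (V : {set T}) (C : {set {set T}}) :
  is_hypergraph V C ->
  properly_splitted V C ->
  psi V C = xaddz (conn_h (Ind V C)) 2%R.
Proof.
by move=> C_hyp C_split; apply: xle_anti; [exact: psi_le_conn | exact: conn_le_psi].
Qed.
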